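(* Let $X$ be a topological space and $n\ge1$ an integer. There exists at most one partition $X=\Gamma_1\sqcup\Gamma_2$ with the following properties: (i) $\Gamma_1$ is open in $X$ and there is a homeomorphism $\psi_1\colon\mathbb R^\times\to\Gamma_1$; (ii) there is a homeomorphism $\psi_2\colon\mathbb R^{2n}\to\Gamma_2$; (iii) for every subset $A\subseteq\mathbb R^\times$ the following are equivalent: $0$ is an accumulation point of $A$; $\Gamma_2\cap\overline{\psi_1(A)}\ne\emptyset$; $\Gamma_2\subseteq\overline{\psi_1(A)}$. Moreover, for such a partition, $\Gamma_2$ is the unique maximal element of the partially ordered set $\mathrm{Cl}_H(X)$.
   Context: $\mathbb R^\times=\mathbb R\setminus\{0\}$. $\mathrm{Cl}_H(X)$ denotes the set of all closed subsets of $X$ that are connected and Hausdorff in the relative topology, partially ordered by inclusion. Subspaces $\Gamma_1,\Gamma_2$ carry the relative topology. *)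

From HB Require Import structures.
From mathcomp Require Import all_boot all_order all_algebra.
From mathcomp Require Import all_classical all_reals all_analysis.
Set Implicit Arguments. Unset Strict Implicit. Unset Printing Implicit Defensive.
Import Order.TTheory GRing.Theory Num.Theory.
Import numFieldNormedType.Exports.
Local Open Scope classical_set_scope.
Local Open Scope ring_scope.

Definition homeo_onto (S T : topologicalType) (A : set S) (B : set T)
  (f : S -> T) : Prop :=
  [/\ f @` A = B, {within A, continuous f} &
      exists g : T -> S,
        [/\ (forall x, A x -> g (f x) = x), g @` B `<=` A &
            {within B, continuous g}]].

Definition rel_hausdorff (T : topologicalType) (A : set T) : Prop :=
  forall x y, A x -> A y -> x != y ->
    exists U V, [/\ open U, open V, U x, V y & U `&` V `&` A = set0].

Definition ClH (T : topologicalType) : set (set T) :=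
  [set C | [/\ closed C, connected C & rel_hausdorff C]].

Definition maximal_in (T : Type) (F : set (set T)) (M : set T) : Prop :=
  F M /\ (forall C, F C -> M `<=` C -> C = M).

Definition unique_maximal_in (T : Type) (F : set (set T)) (M : set T) : Prop :=
  maximal_in F M /\ (forall M', maximal_in F M' -> M' = M).

Definition Rnz (R : realType) : set R := [set x | x != 0].

Definition good_partition (R : realType) (n : nat) (X : topologicalType)
  (G1 G2 : set X) : Prop :=
  [/\ G1 `&` G2 = set0, G1 `|` G2 = setT,
      open G1 /\ (exists psi1 : R -> X, homeo_onto (@Rnz R) G1 psi1 /\
        forall A : set R, A `<=` @Rnz R ->
          [/\ (limit_point A 0 -> G2 `&` closure (psi1 @` A) !=set0),
              (G2 `&` closure (psi1 @` A) !=set0 -> G2 `<=` closure (psi1 @` A))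
            & (G2 `<=` closure (psi1 @` A) -> limit_point A 0)]) &
      exists psi2 : 'rV[R]_(2 * n) -> X, homeo_onto setT G2 psi2].

From HB Require Import structures.
From mathcomp Require Import all_boot all_order all_algebra.
From mathcomp Require Import all_classical all_reals all_analysis.
From mathcomp Require Import lra.
Set Implicit Arguments.
Unset Strict Implicit.
Unset Printing Implicit Defensive.
Import Order.TTheory GRing.Theory Num.Theory Num.Def.
Import numFieldNormedType.Exports.
Local Open Scope classical_set_scope.
Local Open Scope ring_scope.

(* For C in Cl_H(X), the set of s in R^x with psi_1(s) in C cannot accumulate
   at 0: otherwise, by (iii), the closed set C contains Gamma_2, and splitting
   that set according to disjoint neighbourhoods, relative to C, of two points
   of Gamma_2 contradicts (iii) once more.  Hence C /\ Gamma_1 is clopen in C,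
   so a connected C lies in Gamma_2 or in Gamma_1.  Gamma_2 belongs to Cl_H(X)
   and is therefore maximal, while a maximal element inside Gamma_1 would
   absorb psi_1 of every segment of R^x through one of its points, making that
   set accumulate at 0.  So Gamma_2 is the unique maximal element of Cl_H(X),
   and Gamma_1 is its complement. *)

Lemma partition_setC (T : Type) (A B : set T) :
  A `&` B = set0 -> A `|` B = setT -> A = ~` B.
Proof.
move=> AB0 ABT; apply/seteqP; split; first exact/disjoints_subset.
move=> z nBz; have : (A `|` B) z by rewrite ABT.
by case=> // /nBz.
Qed.

Lemma limit_pointS (T : topologicalType) (A B : set T) t :
  A `<=` B -> limit_point A t -> limit_point B t.
Proof.
by move=> AB At U /At[y [yt Ay Uy]]; exists y; split => //; exact: AB.
Qed.

Lemma limit_pointU (T : topologicalType) (A B : set T) t :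
  limit_point (A `|` B) t -> limit_point A t \/ limit_point B t.
Proof.
move=> ABt; apply: contrapT => /not_orP[].
rewrite !not_limit_pointE => -[U Ut AU] [V Vt BV].
have [y [/eqP yt [Ay|By] [Uy Vy]]] := ABt _ (filterI Ut Vt); apply: yt.
  by apply: AU.
by apply: BV.
Qed.

Lemma within_continuous_nbhs (S T : topologicalType) (B : set T) (g : T -> S)
    p N :
  {within B, continuous g} -> B p -> nbhs (g p) N ->
  exists2 W, nbhs p W & forall z, B z -> W z -> N (g z).
Proof.
move=> /subspace_continuousP cg Bp Np.
by exists [set z | B z -> N (g z)] => [|z Bz /(_ Bz)]; [exact: cg|].
Qed.

Lemma homeo_onto_inj (S T : topologicalType) (A : set S) (B : set T) f :
  homeo_onto A B f -> {in A &, injective f}.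
Proof.
move=> [_ _ [g [fK _ _]]] x y /set_mem Ax /set_mem Ay.
by move/(congr1 g); rewrite !fK.
Qed.

Lemma rel_hausdorffS (T : topologicalType) (A B : set T) :
  A `<=` B -> rel_hausdorff B -> rel_hausdorff A.
Proof.
move=> AB hB x y Ax Ay xy.
have [U [V [oU oV Ux Vy UVB]]] := hB x y (AB _ Ax) (AB _ Ay) xy.
exists U, V; split => //; apply/seteqP; split => // z [UVz Az].
by rewrite -UVB; split => //; exact: AB.
Qed.

Lemma homeo_onto_rel_hausdorff (S T : topologicalType) (A : set S) (B : set T)
    f :
  hausdorff_space S -> homeo_onto A B f -> rel_hausdorff B.
Proof.
move=> hS [fA _ [g [fK _ cg]]] x y Bx By xy.
have gxy : g x != g y.
  apply: contra xy; move: Bx By; rewrite -fA => -[a Aa <-] [b Ab <-].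
  by rewrite !fK // => /eqP ->.
move: hS; rewrite open_hausdorff => /(_ _ _ gxy)[[P Q] /= [Px Qy]].
move=> [oP oQ /eqP PQ0].
have [W1 W1x gW1] := within_continuous_nbhs cg Bx
  (open_nbhs_nbhs (conj oP (set_mem Px))).
have [W2 W2y gW2] := within_continuous_nbhs cg By
  (open_nbhs_nbhs (conj oQ (set_mem Qy))).
exists W1°, W2°; split => //; try exact: open_interior.
apply/seteqP; split => // z [[/interior_subset W1z /interior_subset W2z] Bz].
suff : (P `&` Q) (g z) by rewrite PQ0.
by split; [exact: gW1|exact: gW2].
Qed.

Lemma connected_setT_normedMod (R : realType) (V : normedModType R) :
  connected [set: V].
Proof.
have -> : [set: V] = \bigcup_(v in setT) ((fun k : R => k *: v) @` setT).
  by apply/seteqP; split => // v _; exists v => //; exists 1; rewrite ?scale1r.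
apply: bigcup_connected; first by exists 0 => v _; exists 0; rewrite ?scale0r.
move=> v _; apply: connected_continuous_connected.
  exact/connected_intervalP.
by apply: continuous_subspaceT; exact: scalel_continuous.
Qed.

Lemma homeo_onto_ClH (R : realType) (V : normedModType R) (T : topologicalType)
    (B : set T) (f : V -> T) :
  closed B -> homeo_onto setT B f -> ClH B.
Proof.
move=> cB hf; split => //; last exact: homeo_onto_rel_hausdorff hf.
have [<- cf _] := hf; apply: connected_continuous_connected cf.
exact: connected_setT_normedMod.
Qed.

Lemma segment_minmax (R : realType) (a b : R) :
  `[minr a b, maxr a b]%classic a /\ `[minr a b, maxr a b]%classic b.
Proof. by rewrite /= !in_itv /= !ge_min !le_max !lexx ?orbT. Qed.

Lemma segment_same_sign_Rnz (R : realType) (a b : R) : 0 < a * b ->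
  `[minr a b, maxr a b]%classic `<=` @Rnz R.
Proof.
move=> ab s; rewrite /= in_itv /Rnz /= => /andP[lo hi]; apply/negP => /eqP s0.
by move: lo hi; rewrite s0; case: (leP a b) => _; nra.
Qed.

Lemma limit_point0_same_sign (R : realType) (t : R) : t != 0 ->
  limit_point [set s | 0 < t * s] 0.
Proof.
move=> t0 U /nbhs_ballP[e /= e0 eU]; set s := e / 2 * Num.sg t.
have ts : 0 < t * s.
  by rewrite mulrCA [t * _]mulrC -normrEsg mulr_gt0 ?divr_gt0 ?normr_gt0.
exists s; split => //.
- by apply: contraTneq ts => ->; rewrite mulr0 ltxx.
- apply: eU; rewrite -ball_normE /= sub0r normrN normrM normr_sg t0 mulr1.
  by rewrite ger0_norm; lra.
Qed.

Section Cl_H_of_good_partition.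
Variables (R : realType) (X : topologicalType) (G1 G2 : set X).
Variable psi1 : R -> X.
Hypotheses (G2E : G2 = ~` G1) (G1_open : open G1)
  (psi1_homeo : homeo_onto (@Rnz R) G1 psi1)
  (psi1_accumulation : forall A : set R, A `<=` @Rnz R ->
     [/\ (limit_point A 0 -> G2 `&` closure (psi1 @` A) !=set0),
         (G2 `&` closure (psi1 @` A) !=set0 -> G2 `<=` closure (psi1 @` A))
       & (G2 `<=` closure (psi1 @` A) -> limit_point A 0)]).
Variables (x0 y0 : X).
Hypotheses (G2_ClH : ClH G2) (G2x0 : G2 x0) (G2y0 : G2 y0) (x0y0 : x0 != y0).

Lemma limit_point0_closure A : A `<=` @Rnz R ->
  limit_point A 0 -> G2 `<=` closure (psi1 @` A).
Proof.
by move=> AR; have [meet sub _] := psi1_accumulation AR => /meet/sub.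
Qed.

Lemma closure_limit_point0 A : A `<=` @Rnz R ->
  G2 `&` closure (psi1 @` A) !=set0 -> limit_point A 0.
Proof. by move=> AR; have [_ sub lim] := psi1_accumulation AR => /sub/lim. Qed.

Lemma psi1_image : psi1 @` @Rnz R = G1.
Proof. by case: psi1_homeo. Qed.

Lemma psi1_image_preimage (C : set X) :
  psi1 @` (@Rnz R `&` psi1 @^-1` C) = C `&` G1.
Proof.
rewrite -psi1_image; apply/seteqP.
split => [_ [s [Rs Cs] <-]|z [Cz [s Rs sz]]].
  by split => //; exists s.
by exists s => //; split; rewrite /preimage /= ?sz.
Qed.

Lemma closed_psi1_image (I : set R) :
  closed I -> I `<=` @Rnz R -> closed (psi1 @` I).
Proof.
move=> cI IR p clIp; have [G1p|nG1p] := pselect (G1 p); last first.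
  have I0 : I 0.
    apply/cI/subset_limit_point/(closure_limit_point0 IR).
    by exists p; split => //; rewrite G2E.
  by have := IR _ I0; rewrite /Rnz /= eqxx.
have [_ _ [g [gK _ cg]]] := psi1_homeo.
move: (G1p); rewrite -psi1_image => -[s Rs ps]; exists s => //.
suff : I (g p) by rewrite -ps gK.
apply: cI => N /(within_continuous_nbhs cg G1p)[W /clIp[_ [[i Ii <-] Wi]] gW].
exists i; split => //; rewrite -(gK i (IR _ Ii)); apply: gW => //.
by rewrite -psi1_image; exists i => //; exact: IR.
Qed.

Lemma ClH_not_limit_point0 C :
  ClH C -> ~ limit_point (@Rnz R `&` psi1 @^-1` C) 0.
Proof.
move=> [cC _ hC] lim.
have G2C : G2 `<=` C.
  apply: subset_trans (limit_point0_closure (@subIsetl _ _ _) lim) _.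
  by rewrite closureE; apply: smallest_sub => // _ [s [_ Cs] <-].
have [U [V [oU oV Ux Vy UVC]]] := hC _ _ (G2C _ G2x0) (G2C _ G2y0) x0y0.
have CE : C = (C `&` U) `|` (C `&` ~` U) by rewrite -setIUr setUv setIT.
move: lim; rewrite CE preimage_setU setIUr => /limit_pointU[limU|limNU].
  have /(_ _ (open_nbhs_nbhs (conj oV Vy)))[_ [[s [_ [Cs Us]] <-] Vs]] :=
    limit_point0_closure (@subIsetl _ _ _) limU G2y0.
  by suff : (U `&` V `&` C) (psi1 s) by rewrite UVC.
have /(_ _ (open_nbhs_nbhs (conj oU Ux)))[_ [[s [_ [_ NUs]] <-] Us]] :=
  limit_point0_closure (@subIsetl _ _ _) limNU G2x0.
exact: NUs.
Qed.

Lemma ClH_sub_G2_or_G1 C : ClH C -> C `<=` G2 \/ C `<=` G1.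
Proof.
move=> ClC; have nlim := ClH_not_limit_point0 ClC; have [cC conC _] := ClC.
have [[z [Cz G1z]]|nCG1] := pselect (C `&` G1 !=set0); last first.
  by left => z Cz; rewrite G2E => G1z; apply: nCG1; exists z.
have cCG1 : closed (C `&` G1).
  move=> p clp; have Cp : C p.
    by apply: cC; apply: closureS clp; exact: subIsetl.
  split => //; apply: contrapT => nG1p; apply: nlim.
  apply: closure_limit_point0 (@subIsetl _ _ _) _.
  by exists p; rewrite G2E psi1_image_preimage.
have CG1E : C `&` G1 = C.
  apply: conC; [by exists z|by exists G1|].
  by exists (C `&` G1) => //; rewrite setIA setIid.
by right; rewrite -CG1E; exact: subIsetr.
Qed.

Lemma G2_maximal : maximal_in (@ClH X) G2.
Proof.
split => // C ClC G2C; apply/seteqP; split => //.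
have [//|CG1] := ClH_sub_G2_or_G1 ClC.
by have := CG1 _ (G2C _ G2x0); move: G2x0; rewrite G2E.
Qed.

Lemma ClH_setU_psi1_segment C s s' : ClH C -> C `<=` G1 -> C (psi1 s) ->
  0 < s * s' -> ClH (C `|` psi1 @` `[minr s s', maxr s s']%classic).
Proof.
move=> [cC conC hC] CG1 Cs ss'; have IR := segment_same_sign_Rnz ss'.
have [Is _] := segment_minmax s s'.
split.
- by apply: closedU cC (closed_psi1_image (@itv_closed _ _ _ _) IR).
- apply: connectedU conC _; first by exists (psi1 s); split => //; exists s.
  apply: connected_continuous_connected; first exact: segment_connected.
  by have [_ c1 _] := psi1_homeo; exact: continuous_subspaceW IR c1.
- have hG1 := homeo_onto_rel_hausdorff (@norm_hausdorff _ R^o) psi1_homeo.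
  apply: rel_hausdorffS hG1.
  by rewrite subUset; split => //; rewrite -psi1_image; exact: image_subset.
Qed.

Lemma maximal_ClH_eq_G2 M : maximal_in (@ClH X) M -> M = G2.
Proof.
move=> [ClM maxM]; have [MG2|/nonsubset[x [Mx G2x]]] := pselect (M `<=` G2).
  exact/esym/maxM.
have MG1 : M `<=` G1 by case: (ClH_sub_G2_or_G1 ClM) => // /(_ _ Mx)/G2x.
have := MG1 _ Mx; rewrite -psi1_image => -[t Rt tx]; rewrite -tx in Mx.
case: (ClH_not_limit_point0 ClM).
apply: limit_pointS (limit_point0_same_sign Rt) => s ts; split.
  exact: segment_same_sign_Rnz ts _ (segment_minmax t s).2.
rewrite /preimage /= -(maxM _ (ClH_setU_psi1_segment ClM MG1 Mx ts)) //.
by right; exists s => //; have [] := segment_minmax t s.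
Qed.

Lemma G2_unique_maximal : unique_maximal_in (@ClH X) G2.
Proof. by split; [exact: G2_maximal|exact: maximal_ClH_eq_G2]. Qed.

End Cl_H_of_good_partition.

Lemma good_partition_setC (R : realType) (n : nat) (X : topologicalType)
    (G1 G2 : set X) :
  good_partition R n G1 G2 -> G1 = ~` G2.
Proof. by case=> G12 G12T _ _; exact: partition_setC. Qed.

Lemma good_partition_unique_maximal (R : realType) (n : nat)
    (X : topologicalType) (G1 G2 : set X) :
  (0 < n)%N -> good_partition R n G1 G2 -> unique_maximal_in (@ClH X) G2.
Proof.
move=> n_gt0 gp.
have [_ _ [G1_open [psi1 [psi1_homeo psi1_acc]]] [psi2 psi2_homeo]] := gp.
have G2E : G2 = ~` G1 by rewrite (good_partition_setC gp) setCK.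
have G2_ClH : ClH G2.
  by apply: homeo_onto_ClH psi2_homeo; rewrite G2E; exact: open_closedC.
have [G2_im _ _] := psi2_homeo.
have one_neq0 : const_mx 1 != 0 :> 'rV[R]_(2 * n).
  have n2 : (0 < 2 * n)%N by rewrite muln_gt0.
  by apply/eqP => /matrixP/(_ ord0 (Ordinal n2))/eqP; rewrite !mxE oner_eq0.
have psi2_neq : psi2 0 != psi2 (const_mx 1).
  apply: contra one_neq0 => /eqP/(homeo_onto_inj psi2_homeo) ->;
  by rewrite ?inE.
have G2psi2 v : G2 (psi2 v) by rewrite -G2_im; exists v.
apply: (G2_unique_maximal G2E G1_open psi1_homeo psi1_acc G2_ClH _ _ psi2_neq);
  exact: G2psi2.
Qed.

Theorem lemma2p3 (R : realType) (X : topologicalType) (n : nat) :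
  (1 <= n)%N ->
  (forall G1 G2 G1' G2' : set X,
     good_partition R n G1 G2 -> good_partition R n G1' G2' ->
     G1 = G1' /\ G2 = G2') /\
  (forall G1 G2 : set X, good_partition R n G1 G2 ->
     unique_maximal_in (@ClH X) G2).
Proof.
move=> n_gt0; split=> [G1 G2 G1' G2' gp gp'|G1 G2]; last first.
  exact: good_partition_unique_maximal.
have [G2_max _] := good_partition_unique_maximal n_gt0 gp.
have [_ G2'_unique] := good_partition_unique_maximal n_gt0 gp'.
have G2E : G2 = G2' := G2'_unique _ G2_max.
by rewrite (good_partition_setC gp) (good_partition_setC gp') G2E.
Qed.
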